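(* If $f:K\to L$ is a $\times$-homotopy equivalence of simplicial complexes, then $\mathrm{Sing}(f):\mathrm{Sing}(K)\to\mathrm{Sing}(L)$ is a weak equivalence of simplicial sets (Kan–Quillen).
   Context: A simplicial complex $K$ consists of a set $V(K)$ and a collection of nonempty finite subsets (simplices) containing all singletons and closed under nonempty subsets; maps are vertex functions sending simplices to simplices; $\mathbf{Cpx}$ is the category. The product $K\times L$ has vertex set $V(K)\times V(L)$, a finite set being a simplex iff both of its projections are simplices. $I_n$ ($n\ge1$) is the complex on $\{0,\dots,n\}$ whose simplices are singletons and the edges $\{i,i+1\}$. Two maps $f,g:K\to L$ are $\times$-homotopic if for some $n\ge1$ there is a map $H:K\times I_n\to L$ with $H(-,0)=f$ and $H(-,n)=g$. A map $f:K\to L$ is a $\times$-homotopy equivalence if there is $g:L\to K$ with $gf$ $\times$-homotopic to $1_K$ and $fg$ $\times$-homotopic to $1_L$. $\mathbf{\Delta}^n$ is the complex on $\{0,\dots,n\}$ with all nonempty subsets simplices and $\mathrm{Sing}(K)_n=\mathbf{Cpx}(\mathbf{\Delta}^n,K)$ with simplicial operators by precomposition. *)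

From Stdlib Require Import ProofIrrelevance Relation_Operators.
From Stdlib Require List.
From mathcomp Require Import all_boot.
Set Implicit Arguments. Unset Strict Implicit. Unset Printing Implicit Defensive.

Definition image {A B : Type} (f : A -> B) (s : A -> Prop) : B -> Prop :=
  fun y => exists x, s x /\ f x = y.

Definition nonempty_finite {A : Type} (s : A -> Prop) : Prop :=
  (exists x, s x) /\ exists l : list A, forall x, s x <-> List.In x l.

Record Cpx := {
  cV : Type;
  simplex : (cV -> Prop) -> Prop;
  simplex_fin : forall s, simplex s -> nonempty_finite s;
  simplex_single : forall v : cV, simplex (fun x => x = v);
  simplex_sub : forall s t : cV -> Prop, simplex s -> (exists x, t x) ->
                  (forall x, t x -> s x) -> simplex t }.

Definition preserves {A B : Type} (SA : (A -> Prop) -> Prop)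
  (SB : (B -> Prop) -> Prop) (f : A -> B) : Prop :=
  forall s, SA s -> SB (image f s).

Definition is_cmap (K L : Cpx) (f : cV K -> cV L) : Prop :=
  preserves (@simplex K) (@simplex L) f.

Definition prod_simplex {A B : Type} (SA : (A -> Prop) -> Prop)
  (SB : (B -> Prop) -> Prop) (s : A * B -> Prop) : Prop :=
  nonempty_finite s /\ SA (image fst s) /\ SB (image snd s).

(* simplices of I_n, on the vertex set {0,...,n} = 'I_n.+1 *)
Definition interval_simplex (n : nat) (s : 'I_n.+1 -> Prop) : Prop :=
  exists i : 'I_n.+1,
    (forall x, s x <-> x = i) \/
    (forall x, s x <-> x = i \/ nat_of_ord x = (nat_of_ord i).+1).

Definition xhomotopic (K L : Cpx) (f g : cV K -> cV L) : Prop :=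
  exists n : nat, 0 < n /\
    exists H : cV K * 'I_n.+1 -> cV L,
      preserves (prod_simplex (@simplex K) (@interval_simplex n)) (@simplex L) H
      /\ (forall v, H (v, ord0) = f v)
      /\ (forall v, H (v, ord_max) = g v).

Definition xhtpy_equiv (K L : Cpx) (f : cV K -> cV L) : Prop :=
  exists g : cV L -> cV K, is_cmap g /\
    xhomotopic (fun v => g (f v)) (fun v => v) /\
    xhomotopic (fun w => f (g w)) (fun w => w).

Definition mono_map (m n : nat) :=
  {h : 'I_m.+1 -> 'I_n.+1 | forall i j : 'I_m.+1, i <= j -> h i <= h j}.

Definition mono_id (n : nat) : mono_map n n :=
  exist (fun h : 'I_n.+1 -> 'I_n.+1 => forall i j : 'I_n.+1, i <= j -> h i <= h j) (fun i => i) (fun i j h => h).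

Definition mono_comp (k m n : nat) (g : mono_map m n) (f : mono_map k m) :
  mono_map k n :=
  exist (fun h : 'I_k.+1 -> 'I_n.+1 => forall i j : 'I_k.+1, i <= j -> h i <= h j)
    (fun i => sval g (sval f i))
    (fun i j hij => proj2_sig g _ _ (proj2_sig f _ _ hij)).

Record sSet := {
  sx : nat -> Type;
  sact : forall m n : nat, mono_map m n -> sx n -> sx m;
  sact_id : forall n (x : sx n), sact (mono_id n) x = x;
  sact_comp : forall k m n (g : mono_map m n) (f : mono_map k m) (x : sx n),
      sact (mono_comp g f) x = sact f (sact g x) }.

Arguments sact s {m n} f x.
Arguments sx s n.

Unset Implicit Arguments.
Record sMap (X Y : sSet) := {
  smap :> forall n, sx X n -> sx Y n;
  smap_nat : forall m n (f : mono_map m n) (x : sx X n),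
      smap m (sact X f x) = sact Y f (smap n x) }.
Set Implicit Arguments.
Arguments smap {X Y} s n x.
Arguments smap_nat {X Y} s m n f x.

Definition smap_comp (X Y Z : sSet) (g : sMap Y Z) (f : sMap X Y) : sMap X Z.
Proof.
  refine {| smap := fun n x => g n (f n x) |}.
  by move=> m n h x; rewrite smap_nat smap_nat.
Defined.

Definition const_mono (n : nat) (b : 'I_2) : mono_map n 1 :=
  exist (fun h : 'I_n.+1 -> 'I_2 => forall i j : 'I_n.+1, i <= j -> h i <= h j)
    (fun _ => b) (fun _ _ _ => leqnn _).

(* elementary homotopy g ~ g' : a map X x Delta[1] -> Y (written out levelwise,
   Delta[1]_n = monotone maps [n] -> [1]) restricting to g at 0 and g' at 1 *)
Definition elem_homotopy (X Y : sSet) (g g' : sMap X Y) : Prop :=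
  exists H : forall n, sx X n -> mono_map n 1 -> sx Y n,
    (forall m n (f : mono_map m n) (x : sx X n) (t : mono_map n 1),
        H m (sact X f x) (mono_comp t f) = sact Y f (H n x t))
    /\ (forall n x, H n x (const_mono n ord0) = g n x)
    /\ (forall n x, H n x (const_mono n ord_max) = g' n x).

Definition shomotopic (X Y : sSet) : sMap X Y -> sMap X Y -> Prop :=
  clos_refl_sym_trans _ (@elem_homotopy X Y).

Lemma lift_mono (p : nat) (k : 'I_p.+2) (i j : 'I_p.+1) :
  i <= j -> lift k i <= lift k j.
Proof.
  move=> hij; rewrite /= /bump.
  case: (leqP k i) => hi; case: (leqP k j) => hj /=.
  - by rewrite !add1n ltnS.
  - by move: (leq_trans hi hij); rewrite leqNgt hj.
  - by rewrite add0n add1n ltnW // ltnS.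
  - by rewrite !add0n.
Qed.

Definition coface (p : nat) (i : 'I_p.+2) : mono_map p p.+1 :=
  exist (fun h : 'I_p.+1 -> 'I_p.+2 => forall i j : 'I_p.+1, i <= j -> h i <= h j)
    (lift i) (@lift_mono p i).

(* a map from the horn Lambda^{p+1}_k into Z: a family of p-simplices indexed by
   the faces i <> k, agreeing on (all simplices of) the pairwise intersections *)
Definition horn_compatible (Z : sSet) (p : nat) (k : 'I_p.+2)
  (x : forall i : 'I_p.+2, i != k -> sx Z p) : Prop :=
  forall (i j : 'I_p.+2) (hi : i != k) (hj : j != k) (m : nat) (a b : mono_map m p),
    (forall t, lift i (sval a t) = lift j (sval b t)) ->
    sact Z a (x i hi) = sact Z b (x j hj).

Definition Kan (Z : sSet) : Prop :=
  forall (p : nat) (k : 'I_p.+2) (x : forall i : 'I_p.+2, i != k -> sx Z p),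
    horn_compatible x ->
    exists y : sx Z p.+1, forall (i : 'I_p.+2) (hi : i != k),
      sact Z (coface i) y = x i hi.

(* Kan--Quillen weak equivalence (weak homotopy equivalence): for every Kan
   complex Z, precomposition with f induces a bijection on homotopy classes
   [Y, Z] -> [X, Z]. *)
Definition weak_equiv (X Y : sSet) (f : sMap X Y) : Prop :=
  forall Z : sSet, Kan Z ->
    (forall h : sMap X Z, exists g : sMap Y Z, shomotopic (smap_comp g f) h) /\
    (forall g g' : sMap Y Z,
        shomotopic (smap_comp g f) (smap_comp g' f) -> shomotopic g g').

Definition Delta_simplex (n : nat) : ('I_n.+1 -> Prop) -> Prop :=
  @nonempty_finite 'I_n.+1.
Arguments Delta_simplex : clear implicits.

Definition Sing_n (K : Cpx) (n : nat) :=
  {s : 'I_n.+1 -> cV K | preserves (Delta_simplex n) (@simplex K) s}.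

Lemma image_nonempty_finite {A B : Type} (f : A -> B) (s : A -> Prop) :
  nonempty_finite s -> nonempty_finite (image f s).
Proof.
  case=> [[x hx] [l hl]]; split; first by exists (f x), x.
  exists (List.map f l) => y; split.
  - by case=> z [hz <-]; apply: List.in_map; apply/hl.
  - by case/List.in_map_iff=> z [<- hz]; exists z; split=> //; apply/hl.
Qed.

Lemma preserves_comp {A B : Type} (SA : (A -> Prop) -> Prop)
  (SB : (B -> Prop) -> Prop) (K : Cpx) (f : A -> B) (g : B -> cV K) :
  (forall s, SA s -> nonempty_finite s) ->
  preserves SA SB f -> preserves SB (@simplex K) g ->
  preserves SA (@simplex K) (fun a => g (f a)).
Proof.
  move=> hfin hf hg s hs.
  apply: (simplex_sub (hg _ (hf _ hs))).
  - by case: (hfin _ hs) => [[x hx] _]; exists (g (f x)), x.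
  - by move=> y [x [hx <-]]; exists (f x); split=> //; exists x.
Qed.

Lemma mono_preserves (m n : nat) (f : mono_map m n) :
  preserves (Delta_simplex m) (Delta_simplex n) (sval f).
Proof. by move=> s hs; apply: image_nonempty_finite. Qed.

Definition Sing_act (K : Cpx) (m n : nat) (f : mono_map m n) (s : Sing_n K n) :
  Sing_n K m :=
  exist _ (fun i => sval s (sval f i))
    (preserves_comp (fun s hs => hs) (@mono_preserves m n f) (proj2_sig s)).

Definition Sing (K : Cpx) : sSet.
Proof.
  refine {| sx := Sing_n K; sact := @Sing_act K |}.
  - by move=> n [s hs]; rewrite /Sing_act /=; congr exist; apply: proof_irrelevance.
  - by move=> k m n g f [s hs]; rewrite /Sing_act /=; congr exist;
       apply: proof_irrelevance.
Defined.

Definition Sing_map_n (K L : Cpx) (f : cV K -> cV L) (hf : is_cmap f) (n : nat)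
  (s : Sing_n K n) : Sing_n L n :=
  exist _ (fun i => f (sval s i))
    (preserves_comp (fun s hs => hs) (proj2_sig s) hf).

Definition Sing_map (K L : Cpx) (f : cV K -> cV L) (hf : is_cmap f) :
  sMap (Sing K) (Sing L).
Proof.
  refine (@Build_sMap (Sing K) (Sing L) (@Sing_map_n K L f hf) _).
  by move=> m n g [s hs]; rewrite /Sing_map_n /=; congr exist;
     apply: proof_irrelevance.
Defined.

(* Sing turns a x-homotopy H : K x I_n -> L into a chain of n elementary
   simplicial homotopies: for consecutive levels c, c+1 the edge {c, c+1} of I_n
   lets a singular simplex x : Delta^m -> K be sent, for each t : [m] -> [1], to
   the simplex j |-> H (x j, c + t j) of L.  Hence Sing f is a simplicial homotopy
   equivalence, and a homotopy equivalence induces bijections on homotopy classes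
   [-, Z] for every target Z, Kan or not. *)

From Stdlib Require Import ProofIrrelevance FunctionalExtensionality Relation_Operators.
From Stdlib Require List.
From mathcomp Require Import all_boot.

Lemma sval_inj (A : Type) (P : A -> Prop) : injective (@proj1_sig A P).
Proof. exact: eq_sig_hprop (fun _ => proof_irrelevance _). Qed.

Lemma clos_rst_map (A B : Type) (R : A -> A -> Prop) (R' : B -> B -> Prop)
    (F : A -> B) :
  (forall x y, R x y -> R' (F x) (F y)) ->
  forall x y, clos_refl_sym_trans _ R x y -> clos_refl_sym_trans _ R' (F x) (F y).
Proof.
move=> hR x y; elim=> {x y} [x y /hR | x | x y _ | x y z _ hxy _ hyz].
- exact: rst_step.
- exact: rst_refl.
- exact: rst_sym.
- exact: rst_trans hyz.
Qed.

Lemma sMap_ext (X Y : sSet) (g h : sMap X Y) : (forall n x, g n x = h n x) -> g = h.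
Proof.
case: g h => g hg [h hh] /= egh.
have eq_gh : g = h.
  by apply: functional_extensionality_dep => n; apply: functional_extensionality.
by subst h; congr Build_sMap; apply: proof_irrelevance.
Qed.

Section SimplicialHomotopy.

Variables X Y Z : sSet.

Definition smap_id : sMap X X :=
  {| smap := fun n x => x; smap_nat := fun _ _ _ _ => erefl |}.

Lemma smap_comp1 (g : sMap X Y) : smap_comp g smap_id = g.
Proof. exact: sMap_ext. Qed.

Lemma smap_compA (W : sSet) (h : sMap Y Z) (g : sMap X Y) (f : sMap W X) :
  smap_comp h (smap_comp g f) = smap_comp (smap_comp h g) f.
Proof. exact: sMap_ext. Qed.

Lemma shomotopic_postcomp (h : sMap Y Z) (g g' : sMap X Y) :
  shomotopic g g' -> shomotopic (smap_comp h g) (smap_comp h g').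
Proof.
apply: (@clos_rst_map _ _ _ _ (smap_comp h)) => {}g {}g' [H [Hnat [H0 H1]]].
exists (fun n x t => h n (H n x t)); split; [|split] => /=.
- by move=> m n f x t; rewrite Hnat smap_nat.
- by move=> n x; rewrite H0.
- by move=> n x; rewrite H1.
Qed.

Lemma shomotopic_precomp (f : sMap X Y) (g g' : sMap Y Z) :
  shomotopic g g' -> shomotopic (smap_comp g f) (smap_comp g' f).
Proof.
apply: (@clos_rst_map _ _ _ _ (fun k : sMap Y Z => smap_comp k f)).
move=> {}g {}g' [H [Hnat [H0 H1]]].
exists (fun n x t => H n (f n x) t); split; [|split] => /=.
- by move=> m n h x t; rewrite smap_nat Hnat.
- by move=> n x; rewrite H0.
- by move=> n x; rewrite H1.
Qed.

End SimplicialHomotopy.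

Arguments smap_comp1 {X Y} g.
Arguments shomotopic_postcomp {X Y Z} h {g g'}.
Arguments shomotopic_precomp {X Y Z} f {g g'}.

Definition shtpy_equiv {X Y : sSet} (f : sMap X Y) : Prop :=
  exists g : sMap Y X,
    shomotopic (smap_comp g f) (smap_id X) /\ shomotopic (smap_comp f g) (smap_id Y).

Lemma shtpy_equiv_weak_equiv (X Y : sSet) (f : sMap X Y) :
  shtpy_equiv f -> weak_equiv f.
Proof.
move=> [g [gf fg]] Z _; split.
- move=> h; exists (smap_comp h g).
  rewrite -smap_compA -{2}(smap_comp1 h).
  exact: shomotopic_postcomp.
- move=> h h' /(shomotopic_precomp g).
  rewrite -!smap_compA => hh'.
  rewrite -(smap_comp1 h) -(smap_comp1 h').
  apply: rst_trans (rst_sym _ _ _ _ (shomotopic_postcomp h fg)) _.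
  exact: rst_trans hh' (shomotopic_postcomp h' fg).
Qed.

Lemma is_cmap_id (K : Cpx) : is_cmap (fun v : cV K => v).
Proof.
move=> s hs; apply: (simplex_sub hs).
- by have [[v sv] _] := simplex_fin hs; exists v, v.
- by move=> _ [v [sv <-]].
Qed.

Lemma is_cmap_comp {K L M : Cpx} {f : cV K -> cV L} {g : cV L -> cV M} :
  is_cmap f -> is_cmap g -> is_cmap (fun v => g (f v)).
Proof. exact: preserves_comp (@simplex_fin K). Qed.

Lemma Sing_map_ext {K L : Cpx} {f g : cV K -> cV L} (hf : is_cmap f) (hg : is_cmap g) :
  (forall v, f v = g v) -> Sing_map hf = Sing_map hg.
Proof.
move=> efg; apply: sMap_ext => n x; apply: sval_inj.
by apply: functional_extensionality => i /=.
Qed.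

Lemma Sing_map_id (K : Cpx) : Sing_map (is_cmap_id K) = smap_id (Sing K).
Proof. by apply: sMap_ext => n x; apply: sval_inj. Qed.

Lemma Sing_map_comp (K L M : Cpx) (f : cV K -> cV L) (g : cV L -> cV M)
    (hf : is_cmap f) (hg : is_cmap g) :
  Sing_map (is_cmap_comp hf hg) = smap_comp (Sing_map hg) (Sing_map hf).
Proof. by apply: sMap_ext => n x; apply: sval_inj. Qed.

Lemma interval_simplex_edge (n : nat) (a b : 'I_n.+1) :
  a <= b <= a.+1 -> interval_simplex (fun c => c = a \/ c = b).
Proof.
case/andP; rewrite leq_eqVlt => /orP[/eqP/val_inj <- _ | ltab leba].
  by exists a; left => c; split; [case | left].
have eb : val b = a.+1 by apply/eqP; rewrite eqn_leq leba.
exists a; right => c; split=> [[]->|[->|ec]]; [left | right | left | right] => //.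
by apply: val_inj; rewrite /= ec eb.
Qed.

Lemma prod_simplex_edge {K : Cpx} {n : nat} {s : cV K -> Prop} {a b : 'I_n.+1} :
  simplex s -> interval_simplex (fun c => c = a \/ c = b) ->
  prod_simplex (@simplex K) (@interval_simplex n)
    (fun vc => s vc.1 /\ (vc.2 = a \/ vc.2 = b)).
Proof.
move=> hs [i hab]; have [[v0 sv0] [l hl]] := simplex_fin hs.
split; [split|split].
- by exists (v0, a); split=> //; left.
- exists (List.flat_map (fun v => (v, a) :: (v, b) :: nil) l) => -[v c].
  rewrite List.in_flat_map /=; split.
  + by case=> /hl lv [] ->; exists v; split=> //; [left | right; left].
  + by case=> w [/hl sw [[<- <-]|[[<- <-]|[]]]]; split=> //; [left | right].
- apply: (simplex_sub hs); first by exists v0, (v0, a); split=> //; split=> //; left.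
  by move=> v [[w c] [[sw _] <-]].
- exists i; case: hab => hab; [left | right] => c; rewrite -hab; split.
  + by case=> -[w d] [[_ hd] <-].
  + by move=> hc; exists (v0, c).
  + by case=> -[w d] [[_ hd] <-].
  + by move=> hc; exists (v0, c).
Qed.

Section SingXHomotopy.

Variables (K L : Cpx) (n : nat) (H : cV K * 'I_n.+1 -> cV L).
Hypothesis hH : preserves (prod_simplex (@simplex K) (@interval_simplex n)) (@simplex L) H.

Lemma slice_cmap (c : 'I_n.+1) : is_cmap (fun v => H (v, c)).
Proof.
have hcc : interval_simplex (fun d => d = c \/ d = c).
  by apply: interval_simplex_edge; rewrite leqnn leqnSn.
move=> s hs; apply: (simplex_sub (hH _ (prod_simplex_edge hs hcc))).
- by have [[v sv] _] := simplex_fin hs; exists (H (v, c)), v.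
- by move=> _ [v [sv <-]]; exists (v, c); split=> //; split=> //; left.
Qed.

Definition Sing_slice (c : 'I_n.+1) := Sing_map (slice_cmap c).

Definition edge_homotopy (a b : 'I_n.+1) {m : nat} (x : Sing_n K m) (t : mono_map m 1) :
  'I_m.+1 -> cV L :=
  fun j => H (sval x j, if val (sval t j) == 0 then a else b).

Lemma edge_homotopy_simplex {a b : 'I_n.+1} {m : nat} (x : Sing_n K m) (t : mono_map m 1) :
  interval_simplex (fun c => c = a \/ c = b) ->
  preserves (Delta_simplex m) (@simplex L) (edge_homotopy a b x t).
Proof.
move=> hab s hs; have hsx := hH _ (prod_simplex_edge (proj2_sig x s hs) hab).
apply: (simplex_sub hsx).
- by have [[j sj] _] := hs; exists (edge_homotopy a b x t j), j.
- move=> _ [j [sj <-]]; eexists; split; last by [].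
  by split; [exists j | case: ifP; [left | right]].
Qed.

Lemma Sing_slice_edge (a b : 'I_n.+1) :
  a <= b <= a.+1 -> elem_homotopy (Sing_slice a) (Sing_slice b).
Proof.
move=> /interval_simplex_edge hab.
exists (fun m x t => exist _ _ (edge_homotopy_simplex x t hab)); split; [|split].
- by move=> m m' f x t; apply: sval_inj.
- by move=> m x; apply: sval_inj.
- by move=> m x; apply: sval_inj.
Qed.

Lemma Sing_slice_shomotopic (c : 'I_n.+1) : shomotopic (Sing_slice ord0) (Sing_slice c).
Proof.
case: c => k; elim: k => [lt0n | k IHk ltkn].
  by rewrite (_ : Ordinal lt0n = ord0); [exact: rst_refl | exact: val_inj].
apply: (rst_trans _ _ _ _ _ (IHk (ltnW ltkn))); apply: rst_step.
by apply: Sing_slice_edge; rewrite /= leqnSn ltnSn.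
Qed.

End SingXHomotopy.

Arguments slice_cmap {K L n H} hH c.
Arguments Sing_slice_shomotopic {K L n H} hH c.

Lemma Sing_map_xhomotopic (K L : Cpx) (f g : cV K -> cV L) (hf : is_cmap f) (hg : is_cmap g) :
  xhomotopic f g -> shomotopic (Sing_map hf) (Sing_map hg).
Proof.
move=> [n [_ [H [hH [H0 H1]]]]].
rewrite (Sing_map_ext hf (slice_cmap hH ord0) (fun v => esym (H0 v))).
rewrite (Sing_map_ext hg (slice_cmap hH ord_max) (fun v => esym (H1 v))).
exact: Sing_slice_shomotopic.
Qed.

Lemma Sing_xhtpy_equiv (K L : Cpx) (f : cV K -> cV L) (hf : is_cmap f) :
  xhtpy_equiv f -> shtpy_equiv (Sing_map hf).
Proof.
move=> [g [hg [gf fg]]]; exists (Sing_map hg).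
rewrite -!Sing_map_comp -!Sing_map_id.
by split; apply: Sing_map_xhomotopic.
Qed.

Theorem proposition2p36 (K L : Cpx) (f : cV K -> cV L) (hf : is_cmap f) :
  xhtpy_equiv f -> weak_equiv (Sing_map hf).
Proof. by move=> /Sing_xhtpy_equiv /shtpy_equiv_weak_equiv. Qed.
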